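(* Let $\alpha,\beta,\gamma\in\mathbb{Z}_2^n$, $p=(p_0,p_1,p_2)\in\mathbb{Z}_2^3$ and $a,b,c\in\mathbb{Z}_2$. If $\mathrm{wt}(p)$ is even, then $$\mathrm{cadp}_c(\alpha p_0,\beta p_1,\gamma p_2)=\frac{1}{2^{\mathrm{wt}(p)}}\sum_{q\in\mathbb{Z}_2^3,\ q\preceq p}\mathrm{cadp}_{c\oplus q_2}(\alpha^{[q_0]},\beta^{[q_1]},\gamma^{[q_2]}),$$ $$\mathrm{padp}_{a,b}(\alpha p_0,\beta p_1,\gamma p_2)=\frac{1}{2^{\mathrm{wt}(p)}}\sum_{q\in\mathbb{Z}_2^3,\ q\preceq p}\mathrm{padp}_{a\oplus q_0,b\oplus q_1}(\alpha^{[q_0]},\beta^{[q_1]},\gamma^{[q_2]}).$$ If $\mathrm{wt}(p)$ is odd, then $\mathrm{cadp}_c(\alpha p_0,\beta p_1,\gamma p_2)=\mathrm{padp}_{a,b}(\alpha p_0,\beta p_1,\gamma p_2)=0$.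
   Context: For $x\in\mathbb{Z}_2^n$ and a bit $t$, $xt=(x_0,\dots,x_{n-1},t)\in\mathbb{Z}_2^{n+1}$. $\overline{x}$ is the bitwise complement and $x^{[a]}=x$ if $a=0$, $\overline{x}$ if $a=1$. $\mathrm{wt}$ is Hamming weight and $q\preceq p$ means $q_i\le p_i$ for all $i$. Indices $0,\dots,7$ are identified with $\mathbb{Z}_2^3$ via $(p_0,p_1,p_2)\leftrightarrow4p_0+2p_1+p_2$; $e_0,\dots,e_7$ are the standard basis row vectors of $\mathbb{Q}^8$. $A_0$ is $\frac14$ times the $8\times8$ matrix with rows $(4,0,0,1,0,1,1,0)$, $(0,0,0,1,0,1,0,0)$, $(0,0,0,1,0,0,1,0)$, $(0,0,0,1,0,0,0,0)$, $(0,0,0,0,0,1,1,0)$, $(0,0,0,0,0,1,0,0)$, $(0,0,0,0,0,0,1,0)$, $(0,\dots,0)$, and $(A_k)_{i,j}=(A_0)_{i\oplus k,j\oplus k}$. For $\alpha,\beta,\gamma\in\mathbb{Z}_2^m$ let $\omega_i=4\alpha_i+2\beta_i+\gamma_i$. With $L_0=(1,0,1,0,1,0,1,0)$, $L_1=(0,1,0,1,0,1,0,1)$, $L_{0,0}=(1,1,0,0,0,0,0,0)$, $L_{0,1}=(0,0,1,1,0,0,0,0)$, $L_{1,0}=(0,0,0,0,1,1,0,0)$, $L_{1,1}=(0,0,0,0,0,0,1,1)$, define $\mathrm{cadp}_c(\alpha,\beta,\gamma)=L_cA_{\omega_0}\cdots A_{\omega_{m-1}}e_0^T$ and $\mathrm{padp}_{a,b}(\alpha,\beta,\gamma)=L_{a,b}A_{\omega_0}\cdots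 A_{\omega_{m-1}}e_0^T$. *)

From mathcomp Require Import all_boot all_order all_algebra.
Set Implicit Arguments. Unset Strict Implicit. Unset Printing Implicit Defensive.
Import Order.TTheory GRing.Theory Num.Theory.
Local Open Scope ring_scope.

(* Bits of an index i in 0..7 via i = 4 p0 + 2 p1 + p2. *)
Definition bit0 (i : 'I_8) : bool := odd (i %/ 4).
Definition bit1 (i : 'I_8) : bool := odd (i %/ 2).
Definition bit2 (i : 'I_8) : bool := odd i.

Definition idx8 (p0 p1 p2 : bool) : 'I_8 := inord (4 * p0 + 2 * p1 + p2)%N.

Definition xor8 (i k : 'I_8) : 'I_8 :=
  idx8 (bit0 i (+) bit0 k) (bit1 i (+) bit1 k) (bit2 i (+) bit2 k).

Definition A0rows : seq (seq nat) :=
  [:: [:: 4; 0; 0; 1; 0; 1; 1; 0]%N;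
      [:: 0; 0; 0; 1; 0; 1; 0; 0]%N;
      [:: 0; 0; 0; 1; 0; 0; 1; 0]%N;
      [:: 0; 0; 0; 1; 0; 0; 0; 0]%N;
      [:: 0; 0; 0; 0; 0; 1; 1; 0]%N;
      [:: 0; 0; 0; 0; 0; 1; 0; 0]%N;
      [:: 0; 0; 0; 0; 0; 0; 1; 0]%N;
      [:: 0; 0; 0; 0; 0; 0; 0; 0]%N].

Definition A0 : 'M[rat]_8 :=
  \matrix_(i < 8, j < 8) ((nth 0%N (nth [::] A0rows i) j)%:R / 4).

Definition Amat (k : 'I_8) : 'M[rat]_8 :=
  \matrix_(i < 8, j < 8) A0 (xor8 i k) (xor8 j k).

Definition omega m (al be ga : m.-tuple bool) (i : 'I_m) : 'I_8 :=
  idx8 (tnth al i) (tnth be i) (tnth ga i).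

Definition prodA m (al be ga : m.-tuple bool) : 'M[rat]_8 :=
  \prod_(i < m) Amat (omega al be ga i).

Definition e0 : 'rV[rat]_8 := \row_(j < 8) (j == 0 :> nat)%:R.

Definition Lc (c : bool) : 'rV[rat]_8 := \row_(j < 8) (bit2 j == c)%:R.
Definition Lab (a b : bool) : 'rV[rat]_8 :=
  \row_(j < 8) ((bit0 j == a) && (bit1 j == b))%:R.

Definition cadp (c : bool) m (al be ga : m.-tuple bool) : rat :=
  (Lc c *m prodA al be ga *m e0^T) 0 0.
Definition padp (a b : bool) m (al be ga : m.-tuple bool) : rat :=
  (Lab a b *m prodA al be ga *m e0^T) 0 0.

Definition cpl n (x : n.-tuple bool) (a : bool) : n.-tuple bool :=
  if a then map_tuple negb x else x.

Definition app n (x : n.-tuple bool) (t : bool) : n.+1.-tuple bool :=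
  rcons_tuple x t.

Definition wt3 (p0 p1 p2 : bool) : nat := (p0 + p1 + p2)%N.

(* Write P_k for the permutation matrix of i |-> i xor k, an involution, so
   that A_k = P_k A_0 P_k. Complementing the inputs by q xors every omega_i
   with q, hence conjugates the product M = A_{omega_0} ... A_{omega_{n-1}}
   by P_q; since L_{c xor q_2} P_q = L_c and L_{a xor q_0, b xor q_1} P_q =
   L_{a,b}, each summand on the right is the entry q of the row L M.  The left
   side is L M A_p e_0^T, and the column A_p e_0^T is 2^-wt(p) times the
   indicator of {q | q_i <= p_i for all i} when wt(p) is even and vanishes
   when it is odd. *)

From mathcomp Require Import all_boot all_order all_algebra.
Import Order.TTheory GRing.Theory Num.Theory.
Local Open Scope ring_scope.

Lemma idx8E (a b c : bool) : idx8 a b c = (4 * a + 2 * b + c)%N :> nat.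
Proof. by rewrite /idx8 inordK //; case: a; case: b; case: c. Qed.

Lemma bit0_idx8 a b c : bit0 (idx8 a b c) = a.
Proof. by rewrite /bit0 idx8E; case: a; case: b; case: c. Qed.

Lemma bit1_idx8 a b c : bit1 (idx8 a b c) = b.
Proof. by rewrite /bit1 idx8E; case: a; case: b; case: c. Qed.

Lemma bit2_idx8 a b c : bit2 (idx8 a b c) = c.
Proof. by rewrite /bit2 idx8E; case: a; case: b; case: c. Qed.

Lemma idx8_bits (i : 'I_8) : idx8 (bit0 i) (bit1 i) (bit2 i) = i.
Proof. by apply: val_inj; rewrite /= idx8E; case: i => [[|[|[|[|[|[|[|[|]]]]]]]]]. Qed.

Lemma idx8_000 : idx8 false false false = ord0.
Proof. by apply: val_inj; rewrite /= idx8E. Qed.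

Lemma xor8_idx8 a b c x y z :
  xor8 (idx8 a b c) (idx8 x y z) = idx8 (a (+) x) (b (+) y) (c (+) z).
Proof. by rewrite /xor8 !bit0_idx8 !bit1_idx8 !bit2_idx8. Qed.

Lemma xor8C (i k : 'I_8) : xor8 i k = xor8 k i.
Proof. by rewrite -[i]idx8_bits -[k]idx8_bits !xor8_idx8; congr idx8; apply: addbC. Qed.

Lemma xor8A (i j k : 'I_8) : xor8 (xor8 i j) k = xor8 i (xor8 j k).
Proof. by rewrite -[i]idx8_bits -[j]idx8_bits -[k]idx8_bits !xor8_idx8 !addbA. Qed.

Lemma xor8K (i k : 'I_8) : xor8 (xor8 i k) k = i.
Proof. by rewrite -[i]idx8_bits -[k]idx8_bits !xor8_idx8 -!addbA !addbb !addbF. Qed.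

Lemma xor0_8 (k : 'I_8) : xor8 ord0 k = k.
Proof. by rewrite -idx8_000 -[k]idx8_bits xor8_idx8. Qed.

Section XorPermutation.

Variable R : nzRingType.

Definition xor_mx (k : 'I_8) : 'M[R]_8 := \matrix_(i, j) (xor8 i k == j)%:R.

Lemma mul_xor_mx m k (B : 'M[R]_(8, m)) i j : (xor_mx k *m B) i j = B (xor8 i k) j.
Proof.
rewrite mxE (bigD1 (xor8 i k)) //= mxE eqxx mul1r big1 ?addr0 // => l ne.
by rewrite mxE eq_sym (negbTE ne) mul0r.
Qed.

Lemma mulmx_xor m k (B : 'M[R]_(m, 8)) i j : (B *m xor_mx k) i j = B i (xor8 j k).
Proof.
rewrite mxE (bigD1 (xor8 j k)) //= mxE xor8K eqxx mulr1 big1 ?addr0 // => l ne.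
rewrite mxE; case: eqP => [E|]; last by rewrite mulr0.
by case/eqP: ne; rewrite -E xor8K.
Qed.

Lemma xor_mxK k : xor_mx k *m xor_mx k = 1%:M.
Proof. by apply/matrixP => i j; rewrite mul_xor_mx !mxE xor8K. Qed.

End XorPermutation.

Arguments xor_mx {R} k.

Lemma Amat_xor w k : Amat (xor8 w k) = xor_mx k *m Amat w *m xor_mx k.
Proof.
by apply/matrixP => i j; rewrite mulmx_xor mul_xor_mx !mxE !xor8A [xor8 k _]xor8C.
Qed.

Lemma big_idx8 (R : Type) (idx : R) (op : Monoid.com_law idx) (F : 'I_8 -> R) :
  \big[op/idx]_j F j =
  \big[op/idx]_(q0 : bool) \big[op/idx]_(q1 : bool) \big[op/idx]_(q2 : bool)
    F (idx8 q0 q1 q2).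
Proof.
rewrite pair_big pair_big /=.
rewrite (reindex (fun q : bool * bool * bool => idx8 q.1.1 q.1.2 q.2)) //=.
exists (fun i => (bit0 i, bit1 i, bit2 i)) => [[[q0 q1] q2] _ | i _] /=.
  by rewrite bit0_idx8 bit1_idx8 bit2_idx8.
exact: idx8_bits.
Qed.

Lemma Amat_col0 p0 p1 p2 q0 q1 q2 :
  Amat (idx8 p0 p1 p2) (idx8 q0 q1 q2) ord0 =
  if odd (wt3 p0 p1 p2) then 0
  else [&& q0 ==> p0, q1 ==> p1 & q2 ==> p2]%:R / (2 ^ wt3 p0 p1 p2)%:R.
Proof.
rewrite !mxE -idx8_000 /xor8 !bit0_idx8 !bit1_idx8 !bit2_idx8 !idx8E.
by case: p0 p1 p2 q0 q1 q2 => [] [] [] [] [] [] //=; rewrite divff.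
Qed.

Lemma row_mul_Amat_col0 (N : 'rV[rat]_8) p0 p1 p2 :
  (N *m Amat (idx8 p0 p1 p2)) 0 ord0 =
  if odd (wt3 p0 p1 p2) then 0 else
  1 / (2 ^ wt3 p0 p1 p2)%:R *
  \sum_(q0 | q0 ==> p0) \sum_(q1 | q1 ==> p1) \sum_(q2 | q2 ==> p2) N 0 (idx8 q0 q1 q2).
Proof.
rewrite mxE big_idx8.
under eq_bigr do under eq_bigr do under eq_bigr do rewrite Amat_col0.
case: ifP => _.
  rewrite big1 // => q0 _; rewrite big1 // => q1 _.
  by rewrite big1 // => q2 _; rewrite mulr0.
rewrite mulr_sumr [RHS]big_mkcond; apply: eq_bigr => q0 _.
case: (q0 ==> p0) => /=; last first.
  by rewrite big1 // => q1 _; rewrite big1 // => q2 _; rewrite mul0r mulr0.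
rewrite mulr_sumr [RHS]big_mkcond; apply: eq_bigr => q1 _.
case: (q1 ==> p1) => /=; last first.
  by rewrite big1 // => q2 _; rewrite mul0r mulr0.
rewrite mulr_sumr [RHS]big_mkcond; apply: eq_bigr => q2 _.
by case: (q2 ==> p2); rewrite /= ?mul0r ?mulr0 // mul1r mulrC.
Qed.

Lemma tnth_cpl n (x : n.-tuple bool) q i : tnth (cpl x q) i = tnth x i (+) q.
Proof. by case: q; rewrite /cpl ?tnth_map ?addbT ?addbF. Qed.

Lemma omega_cpl n (al be ga : n.-tuple bool) q0 q1 q2 i :
  omega (cpl al q0) (cpl be q1) (cpl ga q2) i = xor8 (omega al be ga i) (idx8 q0 q1 q2).
Proof. by rewrite /omega !tnth_cpl xor8_idx8. Qed.

Lemma prodA_cpl n (al be ga : n.-tuple bool) q0 q1 q2 :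
  let P := xor_mx (idx8 q0 q1 q2) in
  prodA (cpl al q0) (cpl be q1) (cpl ga q2) = P *m prodA al be ga *m P.
Proof.
move=> P; rewrite /prodA.
apply: (big_rec2 (fun x y => x = P *m y *m P)); first by rewrite -idmxE mulmx1 xor_mxK.
move=> i x y _ ->; rewrite omega_cpl Amat_xor -!mulmxE !mulmxA.
by rewrite -[P *m _ *m P *m P]mulmxA xor_mxK mulmx1.
Qed.

Lemma tnth_app_last n (x : n.-tuple bool) t : tnth (app x t) ord_max = t.
Proof. by rewrite (tnth_nth false) /= nth_rcons size_tuple ltnn eqxx. Qed.

Lemma tnth_app_widen n (x : n.-tuple bool) t (i : 'I_n) :
  tnth (app x t) (widen_ord (leqnSn n) i) = tnth x i.
Proof. by rewrite !(tnth_nth false) /= nth_rcons size_tuple ltn_ord. Qed.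

Lemma prodA_app n (al be ga : n.-tuple bool) p0 p1 p2 :
  prodA (app al p0) (app be p1) (app ga p2) = prodA al be ga *m Amat (idx8 p0 p1 p2).
Proof.
rewrite /prodA big_ord_recr mulmxE /omega !tnth_app_last.
by congr (_ * _); apply: eq_bigr => i _; rewrite !tnth_app_widen.
Qed.

Lemma mulmx_e0T m (M : 'M[rat]_(m, 8)) i : (M *m e0^T) i 0 = M i ord0.
Proof.
rewrite mxE (bigD1 ord0) //= !mxE mulr1 big1 ?addr0 // => j /negbTE j_neq0.
by rewrite !mxE -[_ == 0]/(j == ord0) j_neq0 mulr0.
Qed.

Lemma Lc_xor_mx c q0 q1 q2 : Lc (c (+) q2) *m xor_mx (idx8 q0 q1 q2) = Lc c.
Proof.
apply/rowP => j; rewrite mulmx_xor !mxE -[j]idx8_bits xor8_idx8 !bit2_idx8.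
by rewrite (inj_eq (@addIb q2)).
Qed.

Lemma Lab_xor_mx a b q0 q1 q2 :
  Lab (a (+) q0) (b (+) q1) *m xor_mx (idx8 q0 q1 q2) = Lab a b.
Proof.
apply/rowP => j; rewrite mulmx_xor !mxE -[j]idx8_bits xor8_idx8 !bit0_idx8 !bit1_idx8.
by rewrite (inj_eq (@addIb q0)) (inj_eq (@addIb q1)).
Qed.

Lemma cadp_cpl n (al be ga : n.-tuple bool) c q0 q1 q2 :
  cadp (c (+) q2) (cpl al q0) (cpl be q1) (cpl ga q2) =
  (Lc c *m prodA al be ga) 0 (idx8 q0 q1 q2).
Proof. by rewrite /cadp prodA_cpl !mulmxA Lc_xor_mx mulmx_e0T mulmx_xor xor0_8. Qed.

Lemma padp_cpl n (al be ga : n.-tuple bool) a b q0 q1 q2 :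
  padp (a (+) q0) (b (+) q1) (cpl al q0) (cpl be q1) (cpl ga q2) =
  (Lab a b *m prodA al be ga) 0 (idx8 q0 q1 q2).
Proof. by rewrite /padp prodA_cpl !mulmxA Lab_xor_mx mulmx_e0T mulmx_xor xor0_8. Qed.

Lemma cadp_app n (al be ga : n.-tuple bool) c p0 p1 p2 :
  cadp c (app al p0) (app be p1) (app ga p2) =
  (Lc c *m prodA al be ga *m Amat (idx8 p0 p1 p2)) 0 ord0.
Proof. by rewrite /cadp prodA_app mulmxA mulmx_e0T. Qed.

Lemma padp_app n (al be ga : n.-tuple bool) a b p0 p1 p2 :
  padp a b (app al p0) (app be p1) (app ga p2) =
  (Lab a b *m prodA al be ga *m Amat (idx8 p0 p1 p2)) 0 ord0.
Proof. by rewrite /padp prodA_app mulmxA mulmx_e0T. Qed.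

Theorem theorem3 (n : nat) (al be ga : n.-tuple bool) (p0 p1 p2 a b c : bool) :
  (~~ odd (wt3 p0 p1 p2) ->
    cadp c (app al p0) (app be p1) (app ga p2) =
      1 / (2 ^ wt3 p0 p1 p2)%:R *
      \sum_(q0 : bool | q0 ==> p0) \sum_(q1 : bool | q1 ==> p1)
        \sum_(q2 : bool | q2 ==> p2)
          cadp (c (+) q2) (cpl al q0) (cpl be q1) (cpl ga q2)
    /\
    padp a b (app al p0) (app be p1) (app ga p2) =
      1 / (2 ^ wt3 p0 p1 p2)%:R *
      \sum_(q0 : bool | q0 ==> p0) \sum_(q1 : bool | q1 ==> p1)
        \sum_(q2 : bool | q2 ==> p2)
          padp (a (+) q0) (b (+) q1) (cpl al q0) (cpl be q1) (cpl ga q2))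
  /\
  (odd (wt3 p0 p1 p2) ->
    cadp c (app al p0) (app be p1) (app ga p2) = 0 /\
    padp a b (app al p0) (app be p1) (app ga p2) = 0).
Proof.
rewrite cadp_app padp_app !row_mul_Amat_col0.
split=> [even_p | ->] //; rewrite (negbTE even_p).
split; congr (_ * _);
  apply: eq_bigr => q0 _; apply: eq_bigr => q1 _; apply: eq_bigr => q2 _.
  by rewrite cadp_cpl.
by rewrite padp_cpl.
Qed.
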